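(* Let $(i^*_k,j^*_k)$ and $\mu_k$, $k=1,\dots,n$, be a sequence of $k$-th order bottleneck edges and robustness margins for the weights $w_{i,j}=d(p_i(0),g_j)$, and let $\Pi^*$ be a sequential bottleneck optimising assignment for this sequence. Let $\mu=\min_{k\in\{1,\dots,n\}}\mu_k$ and suppose there is $s$ with $s\ge s_{i,i'}$ for all distinct $i,i'\in\mathcal A$ and $s<\mu$. Define $A_k=\min_{l\in\{1,\dots,k\}}\big(w_{i^*_l,j^*_l}+\mu_l\big)-\tfrac12(\mu+s)$ for $k=1,\dots,n$. Let $a:[0,T]\to\mathbb R$ satisfy $a(t)\ge\tfrac12(\mu-s)$ for all $t$. Set $a_{i^*_k}(t)=\min\{a(t),A_k\}$ for $k=1,\dots,n$, $a_{i'}(t)=a_{i^*_n}(t)$ for every $i'\in\mathcal A\setminus\{i^*_1,\dots,i^*_n\}$, and $b_{j^*_k}(t)=A_k-a_{i^*_k}(t)+\tfrac12(\mu-s)$ for $k=1,\dots,n$. Suppose that for all $t\in[0,T]$: $d(p_i(0),p_i(t))<a_i(t)$ for every $i\in\mathcal A$, and $d(p_{i^*_k}(t),g_{j^*_k})<b_{j^*_k}(t)$ for every $k\in\{1,\dots,n\}$. Then for every $k\in\{1,\dots,n\}$, every $i'\in\mathcal A\setminus\{i^*_k\}$ and every $t\in[0,T]$, agents $i^*_k$ and $i'$ do not collide at time $t$, i.e. $d(p_{i^*_k}(t),p_{i'}(t))>s_{i^*_k,i'}$.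
   Context: Let $\mathcal A$ be a finite set of agents with $|\mathcal A|=m>1$ and $\mathcal T$ a finite set of tasks with $m\ge|\mathcal T|=n\ge 1$. Let $d:\mathbb R^{n_p}\times\mathbb R^{n_p}\to[0,\infty)$ be a distance function that is symmetric and satisfies the triangle inequality. Each agent $i\in\mathcal A$ has a position $p_i(t)\in\mathbb R^{n_p}$ for $t\in[0,T]$, each task $j\in\mathcal T$ has a destination $g_j\in\mathbb R^{n_p}$, and for $i\ne i'$ a safety distance $s_{i,i'}=s_{i',i}\ge 0$ is given; agents $i\ne i'$ do not collide at time $t$ if $d(p_i(t),p_{i'}(t))>s_{i,i'}$. The assignment weights are $\mathcal W=\{w_{i,j}=d(p_i(0),g_j)\}$. An assignment is a family $\Pi=\{\pi_{i,j}\in\{0,1\}:(i,j)\in\mathcal A\times\mathcal T\}$. For $\bar{\mathcal A}\subseteq\mathcal A$, $\bar{\mathcal T}\subseteq\mathcal T$ and $\hat{\mathcal E}\subseteq\bar{\mathcal A}\times\bar{\mathcal T}$, $\mathcal P_{\bar{\mathcal A},\bar{\mathcal T}}(\hat{\mathcal E})$ is the set of assignments with $\sum_{i:(i,j)\in\hat{\mathcal E}}\pi_{i,j}=1$ for every $j\in\bar{\mathcal T}$ and $\sum_{j:(i,j)\in\hat{\mathcal E}}\pi_{i,j}\le 1$ for every $i\in\bar{\mathcal A}$. Define $b(\Pi,\hat{\mathcal E})=\max_{(i,j)\in\hat{\mathcal E}}\pi_{i,j}w_{i,j}$; $B_{\bar{\mathcal A},\bar{\mathcal T}}(\hat{\mathcal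 E})=\min_{\Pi\in\mathcal P_{\bar{\mathcal A},\bar{\mathcal T}}(\hat{\mathcal E})}b(\Pi,\hat{\mathcal E})$ (with $\min\emptyset=+\infty$); $\mathcal B_{\bar{\mathcal A},\bar{\mathcal T}}(\hat{\mathcal E})$ the set of minimisers; $E_{\bar{\mathcal A},\bar{\mathcal T}}(\hat{\mathcal E})=\{(i,j)\in\hat{\mathcal E}: w_{i,j}=B_{\bar{\mathcal A},\bar{\mathcal T}}(\hat{\mathcal E})\}$. For $\bar{\mathcal E}=\bar{\mathcal A}\times\bar{\mathcal T}$ with $|\bar{\mathcal E}|>1$: $e_{\bar{\mathcal A},\bar{\mathcal T}}=\arg\max_{(i,j)\in E_{\bar{\mathcal A},\bar{\mathcal T}}(\bar{\mathcal E})}B_{\bar{\mathcal A},\bar{\mathcal T}}(\bar{\mathcal E}\setminus\{(i,j)\})$ and $r_{\bar{\mathcal A},\bar{\mathcal T}}=\max_{(i,j)\in E_{\bar{\mathcal A},\bar{\mathcal T}}(\bar{\mathcal E})}\big(B_{\bar{\mathcal A},\bar{\mathcal T}}(\bar{\mathcal E}\setminus\{(i,j)\})-w_{i,j}\big)$; if $|\bar{\mathcal E}|=1$, $e_{\bar{\mathcal A},\bar{\mathcal T}}=\bar{\mathcal E}$ and $r_{\bar{\mathcal A},\bar{\mathcal T}}=\infty$. Sequential bottleneck assignment: $\bar{\mathcal A}_1=\mathcal A$, $\bar{\mathcal T}_1=\mathcal T$; for $k=1,\dots,n$, $\bar{\mathcal E}_k=\bar{\mathcal A}_k\times\bar{\mathcal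 T}_k$, choose $(i^*_k,j^*_k)\in e_{\bar{\mathcal A}_k,\bar{\mathcal T}_k}$, set $\mu_k=r_{\bar{\mathcal A}_k,\bar{\mathcal T}_k}$, $\bar{\mathcal A}_{k+1}=\bar{\mathcal A}_k\setminus\{i^*_k\}$, $\bar{\mathcal T}_{k+1}=\bar{\mathcal T}_k\setminus\{j^*_k\}$. Given these choices, $\Pi^*$ is sequential bottleneck optimising if $\Pi^*\in\mathcal B_{\bar{\mathcal A}_k,\bar{\mathcal T}_k}(\bar{\mathcal E}_k)$ for all $k$. *)

From HB Require Import structures.
From mathcomp Require Import all_boot all_order all_algebra.
Set Implicit Arguments. Unset Strict Implicit. Unset Printing Implicit Defensive.
Import Order.TTheory GRing.Theory Num.Theory.
Local Open Scope ring_scope.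

(* Extended reals R ∪ {+oo}, used for B (min over empty set = +oo) and r (= oo). *)
Section Ext.
Variable R : realFieldType.

Inductive extR := Fin of R | PInf.

Definition emin (x y : extR) : extR :=
  match x, y with
  | Fin a, Fin b => Fin (Num.min a b)
  | Fin a, PInf => Fin a
  | PInf, y => y
  end.

Definition emax (x y : extR) : extR :=
  match x, y with
  | Fin a, Fin b => Fin (Num.max a b)
  | _, _ => PInf
  end.

Definition ele (x y : extR) : bool :=
  match x, y with
  | _, PInf => true
  | PInf, Fin _ => false
  | Fin a, Fin b => a <= b
  end.

Definition elt (x y : extR) : bool :=
  match x, y with
  | Fin a, PInf => true
  | Fin a, Fin b => a < b
  | PInf, _ => false
  end.

Definition eaddr (x : extR) (c : R) : extR :=
  match x with Fin a => Fin (a + c) | PInf => PInf end.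

Definition eqf (x : extR) (c : R) : bool :=
  match x with Fin a => a == c | PInf => false end.

(* real value of a (provably finite) extended real; default 0 for +oo *)
Definition fin_val (x : extR) : R :=
  match x with Fin a => a | PInf => 0 end.

End Ext.
Arguments PInf {R}.

Section Bottleneck.
Variables (R : realFieldType) (A T : finType) (w : A -> T -> R).

Definition assignment := {ffun A * T -> bool}.

Definition feasible (Ab : {set A}) (Tb : {set T}) (E : {set A * T})
    (P : assignment) : bool :=
  [forall j in Tb, (\sum_(i : A | (i, j) \in E) (P (i, j) : nat))%N == 1%N] &&
  [forall i in Ab, (\sum_(j : T | (i, j) \in E) (P (i, j) : nat))%N <= 1]%N.

Definition bval (P : assignment) (E : {set A * T}) : R :=
  \big[Num.max/0]_(e in E) ((P e : nat)%:R * w e.1 e.2).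

Definition Bv (Ab : {set A}) (Tb : {set T}) (E : {set A * T}) : extR R :=
  \big[@emin R/PInf]_(P : assignment | feasible Ab Tb E P) Fin (bval P E).

Definition Bset (Ab : {set A}) (Tb : {set T}) (E : {set A * T}) : {set assignment} :=
  [set P | feasible Ab Tb E P & eqf (Bv Ab Tb E) (bval P E)].

Definition Eset (Ab : {set A}) (Tb : {set T}) (E : {set A * T}) : {set A * T} :=
  [set e in E | eqf (Bv Ab Tb E) (w e.1 e.2)].

Definition eset (Ab : {set A}) (Tb : {set T}) : {set A * T} :=
  let Eb := setX Ab Tb in
  if #|Eb| == 1%N then Eb
  else [set e in Eset Ab Tb Eb |
         [forall e' in Eset Ab Tb Eb,
            ele (Bv Ab Tb (Eb :\ e')) (Bv Ab Tb (Eb :\ e))]].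

(* r_{Ab,Tb} : robustness margin (max over a nonempty set of values >= 0;
   Fin 0 is used as neutral element of the iterated max) *)
Definition rmargin (Ab : {set A}) (Tb : {set T}) : extR R :=
  let Eb := setX Ab Tb in
  if #|Eb| == 1%N then PInf
  else \big[@emax R/Fin 0]_(e in Eset Ab Tb Eb)
          eaddr (Bv Ab Tb (Eb :\ e)) (- w e.1 e.2).

(* Sequential construction, indices k = 0..n-1 standing for 1..n *)
Variables (n : nat) (istar : 'I_n -> A) (jstar : 'I_n -> T).

Definition Abar (k : nat) : {set A} :=
  [set i | [forall l : 'I_n, (l < k)%N ==> (istar l != i)]].
Definition Tbar (k : nat) : {set T} :=
  [set j | [forall l : 'I_n, (l < k)%N ==> (jstar l != j)]].

Definition seq_bottleneck (mu : 'I_n -> extR R) : Prop :=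
  forall k : 'I_n,
    (istar k, jstar k) \in eset (Abar k) (Tbar k) /\
    mu k = rmargin (Abar k) (Tbar k).

Definition seq_bottleneck_optimising (P : assignment) : Prop :=
  forall k : 'I_n, P \in Bset (Abar k) (Tbar k) (setX (Abar k) (Tbar k)).

Definition mu_min (mu : 'I_n -> extR R) : extR R :=
  \big[@emin R/PInf]_(k : 'I_n) mu k.

Definition Ak (mu : 'I_n -> extR R) (s : R) (k : nat) : R :=
  fin_val (\big[@emin R/PInf]_(l : 'I_n | (l <= k)%N)
              eaddr (mu l) (w (istar l) (jstar l)))
  - (fin_val (mu_min mu) + s) / 2.

Definition agent_bound (mu : 'I_n -> extR R) (s : R) (a : R -> R)
    (i : A) (t : R) : R :=
  match [pick k : 'I_n | istar k == i] with
  | Some k => Num.min (a t) (Ak mu s k)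
  | None => Num.min (a t) (Ak mu s n.-1)
  end.

Definition task_bound (mu : 'I_n -> extR R) (s : R) (a : R -> R)
    (k : 'I_n) (t : R) : R :=
  Ak mu s k - Num.min (a t) (Ak mu s k) + (fin_val (mu_min mu) - s) / 2.

End Bottleneck.

(* Let e_k = (istar k, jstar k). Swapping in Pi the tasks of istar k and of an
   agent u still available at stage k gives a feasible assignment of stage k that
   avoids e_k; by the definition of the robustness margin its bottleneck cost is
   at least w_k + mu_k. For u = istar l with l > k that cost is at most
   max (w (istar k) (jstar l)) (w (istar l) (jstar k)), and for an unassigned u
   it is at most w u (jstar k). So one of the two agents starts at distance at
   least A_k + (mu + s)/2 from the other's goal, whereas the bounds a_i and b_j
   keep its deviation plus the other agent's distance to that goal below
   A_k + (mu - s)/2. The triangle inequality then separates the two agents by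
   more than s. *)

From mathcomp Require Import all_boot all_order all_algebra perm.
From mathcomp Require Import lra.
Import Order.TTheory GRing.Theory Num.Theory.
Local Open Scope ring_scope.
Set Implicit Arguments. Unset Strict Implicit.

Section ExtendedOrder.
Variable R : realFieldType.
Implicit Types x y z : extR R.

Lemma ele_trans x y z : ele x y -> ele y z -> ele x z.
Proof. by case: x => [a|]; case: y => [b|]; case: z => [c|] //=; apply: le_trans. Qed.

Lemma elt_ele_trans x y z : elt x y -> ele y z -> elt x z.
Proof. by case: x => [a|]; case: y => [b|]; case: z => [c|] //=; apply: lt_le_trans. Qed.

Lemma emax_le x y (c : R) : ele x (Fin c) -> ele y (Fin c) -> ele (emax x y) (Fin c).
Proof. by case: x => [a|]; case: y => [b|] //= xc yc; rewrite ge_max xc yc. Qed.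

Lemma le_emin x y z : ele z x -> ele z y -> ele z (emin x y).
Proof.
by case: x => [a|]; case: y => [b|]; case: z => [c|] //= zx zy; rewrite le_min zx zy.
Qed.

Lemma emin_le_cond (I : finType) (P : pred I) (F : I -> extR R) i :
  P i -> ele (\big[@emin R/PInf]_(j | P j) F j) (F i).
Proof.
have emin_l x y : ele (emin x y) x.
  by case: x => [a|]; case: y => [b|] //=; rewrite ?ge_min ?lexx.
have emin_r x y : ele (emin x y) y.
  by case: x => [a|]; case: y => [b|] //=; rewrite ?ge_min ?lexx ?orbT.
move: (mem_index_enum i); elim: (index_enum I) => [//|j r IH].
rewrite inE big_cons => /orP [/eqP <- -> //|ir Pi].
by case: (P j); [apply: ele_trans (emin_r _ _) (IH ir Pi) | apply: IH].
Qed.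

Lemma le_emin_cond (I : finType) (P : pred I) (F : I -> extR R) z :
  (forall i, P i -> ele z (F i)) -> ele z (\big[@emin R/PInf]_(j | P j) F j).
Proof.
move=> zF; elim/big_ind: _ => //; first by case: z {zF}.
by move=> x y; apply: le_emin.
Qed.

End ExtendedOrder.

Lemma sum_bool_le1_eq (I : finType) (P : pred I) (b : I -> bool) x y :
  (\sum_(i | P i) (b i : nat) <= 1)%N -> P x -> b x -> P y -> b y -> x = y.
Proof.
move=> sum_le1 Px bx Py b_y; apply/eqP; apply: contraTT sum_le1 => xy.
by rewrite (bigD1 x) //= (bigD1 y) /= ?Py 1?eq_sym // bx b_y.
Qed.

Section Feasibility.
Variables (R : realFieldType) (A T : finType) (w : A -> T -> R).
Implicit Types (Ab : {set A}) (Tb : {set T}) (E : {set A * T}) (P : assignment A T).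

Lemma feasible_col_uniq Ab Tb P j i1 i2 : feasible Ab Tb (setX Ab Tb) P ->
  j \in Tb -> i1 \in Ab -> i2 \in Ab -> P (i1, j) -> P (i2, j) -> i1 = i2.
Proof.
case/andP=> /forallP/(_ j)/implyP col _ jT i1A i2A Pi1 Pi2.
apply: (sum_bool_le1_eq (P := fun i => (i, j) \in setX Ab Tb) (b := fun i => P (i, j)))
  _ _ Pi1 _ Pi2.
- by rewrite (eqP (col jT)).
- by rewrite in_setX i1A jT.
- by rewrite in_setX i2A jT.
Qed.

Lemma feasible_row_uniq Ab Tb P i j1 j2 : feasible Ab Tb (setX Ab Tb) P ->
  i \in Ab -> j1 \in Tb -> j2 \in Tb -> P (i, j1) -> P (i, j2) -> j1 = j2.
Proof.
case/andP=> _ /forallP/(_ i)/implyP row iA j1T j2T Pj1 Pj2.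
apply: (sum_bool_le1_eq (P := fun j => (i, j) \in setX Ab Tb) (b := fun j => P (i, j)))
  (row iA) _ Pj1 _ Pj2.
- by rewrite in_setX iA j1T.
- by rewrite in_setX iA j2T.
Qed.

Lemma feasible_col_ex Ab Tb E P j : feasible Ab Tb E P -> j \in Tb ->
  exists2 i, (i, j) \in E & P (i, j).
Proof.
case/andP=> /forallP/(_ j)/implyP col _ /col sum1.
case: (pickP (fun i => ((i, j) \in E) && P (i, j))) => [i /andP[] | none]; first by exists i.
by move: sum1; rewrite big1 // => i iE; move: (none i); rewrite iE => /= ->.
Qed.

Lemma feasibleD1 Ab Tb E P e : feasible Ab Tb E P -> P e = false ->
  feasible Ab Tb (E :\ e) P.
Proof.
move=> /andP[/forallP col /forallP row] Pe.
have sumD1 (I : finType) (f : I -> A * T) :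
    (\sum_(x | f x \in E :\ e) P (f x) = \sum_(x | f x \in E) P (f x))%N.
  rewrite big_mkcond [RHS]big_mkcond; apply: eq_bigr => x _.
  by rewrite in_setD1; case: eqP => [->|]; rewrite ?Pe ?if_same.
apply/andP; split; apply/forallP.
  by move=> j; rewrite (sumD1 _ (fun i => (i, j))); apply: col.
by move=> i; rewrite (sumD1 _ (fun j => (i, j))); apply: row.
Qed.

Lemma feasible_perm Ab Tb P (s : {perm A}) : {mono s : i / i \in Ab} ->
  feasible Ab Tb (setX Ab Tb) P -> feasible Ab Tb (setX Ab Tb) [ffun e => P (s e.1, e.2)].
Proof.
move=> sAb /andP[/forallP col /forallP row]; apply/andP; split; apply/forallP.
  move=> j; apply: etrans (col j); congr (_ ==> _).
  rewrite [in RHS](reindex_inj (@perm_inj _ s)) /=.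
  by congr (_ == _); apply: eq_big => i; rewrite ?ffunE // !in_setX sAb.
move=> i; rewrite -sAb; apply: etrans (row (s i)); congr (_ ==> _).
by congr (_ <= _)%N; apply: eq_big => j; rewrite ?ffunE // !in_setX sAb.
Qed.

Lemma bval_ge0 P E : 0 <= bval w P E.
Proof. exact: bigmax_ge_id. Qed.

Lemma bval_ge P E i j : (i, j) \in E -> P (i, j) -> w i j <= bval w P E.
Proof.
move=> ijE Pij; have := le_bigmax_cond 0 (fun e => (P e : nat)%:R * w e.1 e.2) ijE.
by rewrite /= Pij mul1r.
Qed.

Lemma bval_le P E (c : R) : 0 <= c ->
  (forall i j, (i, j) \in E -> P (i, j) -> w i j <= c) -> bval w P E <= c.
Proof.
move=> c_ge0 wc; apply: bigmax_le => // [[i j]] ijE /=.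
by case Pij: (P (i, j)); rewrite ?mul0r ?mul1r //; apply: wc.
Qed.

Lemma bvalD1 P E e : bval w P (E :\ e) <= bval w P E.
Proof.
apply: bval_le (bval_ge0 _ _) _ => i j /setD1P[_ ijE].
exact: bval_ge.
Qed.

End Feasibility.

Lemma eset_sub (R : realFieldType) (A T : finType) (w : A -> T -> R)
    (Ab : {set A}) (Tb : {set T}) e :
  e \in eset w Ab Tb -> e \in setX Ab Tb.
Proof.
by rewrite /eset; case: ifP => // _; rewrite in_set /Eset in_set => /andP[/andP[]].
Qed.

Section Fresh.
Variables (X : finType) (n : nat) (f : 'I_n -> X).

Lemma mem_Abar x (k : nat) :
  (x \in Abar f k) = [forall l : 'I_n, (l < k)%N ==> (f l != x)].
Proof. by rewrite inE. Qed.

Hypothesis f_fresh : forall l, f l \in Abar f l.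

Lemma fresh_le (k : nat) (l : 'I_n) : (k <= l)%N -> f l \in Abar f k.
Proof.
move=> kl; have /[!mem_Abar] /forallP fl := f_fresh l.
apply/forallP => m; apply/implyP => mk.
by apply: (implyP (fl m)); apply: leq_trans kl.
Qed.

Lemma fresh_neq (k l : 'I_n) : (k < l)%N -> f k != f l.
Proof. by move=> kl; have /[!mem_Abar] /forallP/(_ k) := f_fresh l; rewrite kl. Qed.

Lemma fresh_inj : injective f.
Proof.
move=> k l fkl; case: (ltngtP k l) => [kl|lk|/val_inj //].
  by move: (fresh_neq kl); rewrite fkl eqxx.
by move: (fresh_neq lk); rewrite fkl eqxx.
Qed.

End Fresh.

Section SequentialBottleneck.
Variables (R : realFieldType) (A T : finType) (w : A -> T -> R) (n : nat)
  (istar : 'I_n -> A) (jstar : 'I_n -> T) (mu : 'I_n -> extR R)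
  (Pi : assignment A T).
Hypotheses (seqB : seq_bottleneck w istar jstar mu)
  (Pi_opt : seq_bottleneck_optimising w istar jstar Pi)
  (mu_gt0 : forall k, elt (Fin 0) (mu k)).

Local Notation Ab k := (Abar istar k).
Local Notation Tb k := (Tbar jstar k).
Local Notation Eb k := (setX (Abar istar k) (Tbar jstar k)).
Local Notation ek k := (istar k, jstar k).
Local Notation wk k := (w (istar k) (jstar k)).

Lemma star_in_Ebar (k : 'I_n) : ek k \in Eb k.
Proof. exact: eset_sub (proj1 (seqB k)). Qed.

Lemma istar_fresh (k : 'I_n) : istar k \in Ab k.
Proof. by have /[!in_setX] /andP[] := star_in_Ebar k. Qed.

(* [Tbar] is the construction [Abar] on tasks; stating freshness with [Abar]
   lets the lemmas of section [Fresh] apply to [jstar]. *)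
Lemma jstar_fresh (k : 'I_n) : jstar k \in Abar jstar k.
Proof. by have /[!in_setX] /andP[] := star_in_Ebar k. Qed.

Lemma istar_inj : injective istar.
Proof. exact: fresh_inj istar_fresh. Qed.

Lemma jstar_inj : injective jstar.
Proof. exact: fresh_inj jstar_fresh. Qed.

Lemma Bv_bottleneck (k : 'I_n) : #|Eb k| != 1%N ->
  Bv w (Ab k) (Tb k) (Eb k) = Fin (wk k).
Proof.
move=> Eb_ne1; have := proj1 (seqB k); rewrite /eset /= (negbTE Eb_ne1).
rewrite in_set /Eset in_set => /andP[/andP[_]].
by case: (Bv _ _ _ _) => //= b /eqP ->.
Qed.

Lemma rmargin_le (k : 'I_n) (X : R) : #|Eb k| != 1%N ->
  ele (Bv w (Ab k) (Tb k) (Eb k :\ ek k)) (Fin X) ->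
  ele (mu k) (Fin (Num.max 0 (X - wk k))).
Proof.
move=> Eb_ne1 BX; have := proj1 (seqB k).
rewrite /eset /= (negbTE Eb_ne1) in_set => /andP[_ /forallP ek_max].
rewrite (proj2 (seqB k)) /rmargin /= (negbTE Eb_ne1).
elim/big_ind: _ => [|x y|e eE]; [by rewrite /= le_max lexx | exact: emax_le |].
have /ele_trans/(_ BX) := implyP (ek_max e) eE.
move: eE; rewrite /Eset in_set Bv_bottleneck // => /andP[_ /= /eqP <-].
by case: (Bv _ _ _ _) => //= b bX; rewrite le_max lerD2r bX orbT.
Qed.

(* [Q] witnesses [B(Ebar_k \ e_k) <= b(Q)], and [e_k] maximises [B(Ebar_k \ e)]
   over the bottleneck edges [e], all of weight [w_k]. *)
Lemma margin_le (k : 'I_n) Q (c : R) : #|Eb k| != 1%N ->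
  feasible (Ab k) (Tb k) (Eb k) Q -> Q (ek k) = false ->
  bval w Q (Eb k) <= Num.max c (wk k) -> ele (eaddr (mu k) (wk k)) (Fin c).
Proof.
move=> Eb_ne1 Qfeas Qk Qc.
have := rmargin_le Eb_ne1 (emin_le_cond (fun P => Fin (bval w P _)) (feasibleD1 Qfeas Qk)).
have := bvalD1 w Q (Eb k) (ek k).
move: (mu_gt0 k); case: (mu k) => //= m m_gt0 QD1; move: Qc.
by rewrite !le_max => /orP[] ? /orP[] ?; lra.
Qed.

Lemma Pi_feasible (k : 'I_n) : feasible (Ab k) (Tb k) (Eb k) Pi.
Proof. by have /[!in_set] /andP[] := Pi_opt k. Qed.

Lemma bval_Pi (k : 'I_n) : #|Eb k| != 1%N -> bval w Pi (Eb k) = wk k.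
Proof.
by move=> Eb_ne1; have /[!in_set] /andP[_] := Pi_opt k; rewrite Bv_bottleneck //= => /eqP.
Qed.

Lemma Pi_star (k : 'I_n) : Pi (ek k).
Proof.
have [Eb_1 | Eb_ne1] := eqVneq #|Eb k| 1%N.
  have [i iE Pij] := feasible_col_ex (Pi_feasible k) (jstar_fresh k).
  by move/eqP/cards1P: Eb_1 iE (star_in_Ebar k) => [e ->] /set1P <- /set1P[->].
apply/negPn/negP => /negbTE Pk.
have := margin_le Eb_ne1 (Pi_feasible k) Pk (c := wk k - 1).
rewrite bval_Pi // le_max lexx orbT => /(_ isT).
by move: (mu_gt0 k); case: (mu k) => //= m ? ?; lra.
Qed.

Lemma Pi_row (k l : 'I_n) j : (k <= l)%N -> j \in Tb k -> Pi (istar l, j) -> j = jstar l.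
Proof.
move=> kl jT Plj.
exact: feasible_row_uniq (Pi_feasible k) (fresh_le istar_fresh kl) jT
  (fresh_le jstar_fresh kl) Plj (Pi_star l).
Qed.

Lemma unassigned_Abar u (k : nat) : (forall l, istar l != u) -> u \in Ab k.
Proof. by move=> u_free; rewrite mem_Abar; apply/forallP => l; rewrite u_free implybT. Qed.

(* Swapping the tasks of [istar k] and [u] in [Pi] gives a feasible assignment of
   stage [k] avoiding [e_k] whose only new edges are [(u, jstar k)] and [(istar k, j)]. *)
Lemma margin_swap (k : 'I_n) u (c : R) : u \in Ab k -> u != istar k ->
  w u (jstar k) <= c -> (forall j, j \in Tb k -> Pi (u, j) -> w (istar k) j <= c) ->
  ele (eaddr (mu k) (wk k)) (Fin c).
Proof.
move=> uA u_ne wu_c wk_c.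
have iA := istar_fresh k; have jT := jstar_fresh k.
pose Q : assignment A T := [ffun e => Pi (tperm (istar k) u e.1, e.2)].
have Eb_ne1 : #|Eb k| != 1%N.
  apply/negbT/gtn_eqF/card_gt1P; exists (ek k), (u, jstar k).
  by rewrite star_in_Ebar in_setX uA jT xpair_eqE eq_sym (negbTE u_ne).
have Qfeas : feasible (Ab k) (Tb k) (Eb k) Q.
  by apply: feasible_perm (Pi_feasible k) => i; case: tpermP => [->|->|]; rewrite ?uA ?iA.
have Qk : Q (ek k) = false.
  rewrite ffunE /= tpermL; apply/negbTE/negP => Pu.
  by move: u_ne; rewrite (feasible_col_uniq (Pi_feasible k) jT uA iA Pu (Pi_star k)) eqxx.
apply: (margin_le Eb_ne1 Qfeas Qk).
have wk_ge0 : 0 <= wk k by rewrite -(bval_Pi Eb_ne1) bval_ge0.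
apply: bval_le => [|i j ijE]; first by rewrite le_max wk_ge0 orbT.
have /[!in_setX] /andP[_ jTb] := ijE.
rewrite ffunE /=; case: tpermP => [->|->|_ _] Pij.
- by rewrite le_max wk_c.
- by rewrite (feasible_row_uniq (Pi_feasible k) iA jTb jT Pij (Pi_star k)) le_max wu_c.
- by rewrite le_max -(bval_Pi Eb_ne1) (bval_ge _ ijE Pij) orbT.
Qed.

Lemma margin_cross (k l : 'I_n) : (k < l)%N ->
  ele (eaddr (mu k) (wk k)) (Fin (Num.max (w (istar k) (jstar l)) (w (istar l) (jstar k)))).
Proof.
move=> kl; apply: (margin_swap (u := istar l)).
- by apply: fresh_le (ltnW kl) => m; apply: istar_fresh.
- by rewrite eq_sym (fresh_neq istar_fresh kl).
- by rewrite le_max lexx orbT.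
- by move=> j jT /(Pi_row (ltnW kl) jT) ->; rewrite le_max lexx.
Qed.

Hypothesis card_T : #|T| = n.

Lemma Pi_unassigned u j : (forall l, istar l != u) -> Pi (u, j) = false.
Proof.
move=> u_free; apply/negbTE/negP => Puj.
have /codomP[l jl] : j \in codom jstar.
  by apply: (inj_card_onto jstar_inj); rewrite card_ord card_T.
move: Puj (u_free l); rewrite jl => Pul.
by rewrite (feasible_col_uniq (Pi_feasible l) (jstar_fresh l) (unassigned_Abar _ u_free)
  (istar_fresh l) Pul (Pi_star l)) eqxx.
Qed.

Lemma margin_unassigned (k : 'I_n) u : (forall l, istar l != u) ->
  ele (eaddr (mu k) (wk k)) (Fin (w u (jstar k))).
Proof.
move=> u_free; apply: (margin_swap (unassigned_Abar _ u_free)) => //.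
  by rewrite eq_sym.
by move=> j _; rewrite Pi_unassigned.
Qed.

End SequentialBottleneck.

Section Budgets.
Variables (R : realFieldType) (A T : finType) (w : A -> T -> R) (n : nat)
  (istar : 'I_n -> A) (jstar : 'I_n -> T) (mu : 'I_n -> extR R).

Definition margin_cap (k : nat) : extR R :=
  \big[@emin R/PInf]_(l : 'I_n | (l <= k)%N) eaddr (mu l) (w (istar l) (jstar l)).

Lemma mu_gt0_of_min (s : R) : 0 <= s -> elt (Fin s) (mu_min mu) ->
  forall k, elt (Fin 0) (mu k).
Proof.
move=> s_ge0 s_mu k; have := elt_ele_trans s_mu (emin_le_cond mu (isT : xpredT k)).
by case: (mu k) => //= m; apply: le_lt_trans.
Qed.

Lemma Ak_le (k : 'I_n) (l : nat) (c s : R) : (k <= l)%N ->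
  ele (eaddr (mu k) (w (istar k) (jstar k))) (Fin c) ->
  Ak w istar jstar mu s l <= Ak w istar jstar mu s k <= c - (fin_val (mu_min mu) + s) / 2.
Proof.
move=> kl mu_c.
have cap_c : ele (margin_cap k) (Fin c) := ele_trans (emin_le_cond _ (leqnn k)) mu_c.
have cap_lk : ele (margin_cap l) (margin_cap k).
  by apply: le_emin_cond => m mk; apply: emin_le_cond; apply: leq_trans kl.
rewrite /Ak -/(margin_cap k) -/(margin_cap l) !lerD2r.
by move: cap_lk cap_c; case: (margin_cap k) => [x|] //; case: (margin_cap l) => [y|] //= -> ->.
Qed.

End Budgets.

Lemma min_budget (R : realFieldType) (x B C : R) : B <= C ->
  Num.min x B + (C - Num.min x C) <= C /\ Num.min x C + (B - Num.min x B) <= C.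
Proof. by move=> BC; rewrite !minEle; case: (lerP x B); case: (lerP x C); split; lra. Qed.

Section Collision.
Variables (R : realFieldType) (X : Type) (d : X -> X -> R) (A T : finType)
  (p : A -> R -> X) (g : T -> X) (n : nat) (istar : 'I_n -> A) (jstar : 'I_n -> T)
  (mu : 'I_n -> extR R) (s : R) (a : R -> R) (t : R).
Hypotheses (d_sym : forall x y, d x y = d y x)
  (d_tri : forall x y z, d x z <= d x y + d y z).

Local Notation w := (fun i j => d (p i 0) (g j)).
Local Notation A_ := (Ak w istar jstar mu s).
Local Notation abound := (agent_bound w istar jstar mu s a).

Hypotheses (istar_inj : injective istar)
  (agent_dev : forall i, d (p i 0) (p i t) < abound i t)
  (task_dev : forall k, d (p (istar k) t) (g (jstar k)) < task_bound w istar jstar mu s a k t).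

Lemma agent_bound_star (k : 'I_n) : abound (istar k) t = Num.min (a t) (A_ k).
Proof.
rewrite /agent_bound; case: pickP => [l /eqP /istar_inj -> //|none].
by move: (none k); rewrite eqxx.
Qed.

Lemma agent_bound_unassigned u : (forall l, istar l != u) ->
  abound u t = Num.min (a t) (A_ n.-1).
Proof.
move=> u_free; rewrite /agent_bound; case: pickP => [l /eqP lu|//].
by move: (u_free l); rewrite lu eqxx.
Qed.

(* Triangle inequality along [p q 0], [p q t], [p (istar k) t], [g (jstar k)];
   the two occurrences of [mu] in the budgets cancel. *)
Lemma no_collision_of_far_start q (k : 'I_n) (c : R) :
  abound q t + (A_ k - Num.min (a t) (A_ k)) <= c - (fin_val (mu_min mu) + s) / 2 ->
  c <= d (p q 0) (g (jstar k)) -> s < d (p (istar k) t) (p q t).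
Proof.
move=> budget c_le.
have := d_tri (p q 0) (p q t) (g (jstar k)).
have := d_tri (p q t) (p (istar k) t) (g (jstar k)).
have := agent_dev q; have := task_dev k.
rewrite /task_bound (d_sym (p q t) (p (istar k) t)); lra.
Qed.

Lemma no_collision_pair (k l : 'I_n) : (k < l)%N ->
  ele (eaddr (mu k) (w (istar k) (jstar k)))
      (Fin (Num.max (w (istar k) (jstar l)) (w (istar l) (jstar k)))) ->
  s < d (p (istar k) t) (p (istar l) t).
Proof.
move=> kl margin; have /andP[Alk Akc] := Ak_le s (ltnW kl) margin.
have [budget_k budget_l] := min_budget (a t) Alk.
have [wkl | wlk] := leP (w (istar k) (jstar l)) (w (istar l) (jstar k)).
  rewrite (max_r wkl) in Akc; apply: (no_collision_of_far_start _ (lexx _)).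
  by rewrite !agent_bound_star; lra.
rewrite (max_l (ltW wlk)) in Akc; rewrite d_sym; apply: (no_collision_of_far_start _ (lexx _)).
by rewrite !agent_bound_star; lra.
Qed.

Lemma no_collision_unassigned (k : 'I_n) u : (forall l, istar l != u) ->
  ele (eaddr (mu k) (w (istar k) (jstar k))) (Fin (w u (jstar k))) ->
  s < d (p (istar k) t) (p u t).
Proof.
move=> u_free margin.
have kn : (k <= n.-1)%N by rewrite -ltnS prednK // (leq_ltn_trans _ (ltn_ord k)).
have /andP[Ank Akc] := Ak_le s kn margin.
have [budget _] := min_budget (a t) Ank.
apply: (no_collision_of_far_start _ (lexx _)).
by rewrite agent_bound_unassigned //; lra.
Qed.

End Collision.

Unset Implicit Arguments.

Theorem theorem1 (R : realFieldType) (Ag Tk : finType) (np : nat)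
  (d : 'rV[R]_np -> 'rV[R]_np -> R)
  (hd0 : forall x y, 0 <= d x y)
  (hdsym : forall x y, d x y = d y x)
  (hdtri : forall x y z, d x z <= d x y + d y z)
  (Tend : R) (p : Ag -> R -> 'rV[R]_np) (g : Tk -> 'rV[R]_np)
  (sf : Ag -> Ag -> R)
  (hsf_sym : forall i i', i != i' -> sf i i' = sf i' i)
  (hsf0 : forall i i', i != i' -> 0 <= sf i i')
  (n : nat) (hm : (1 < #|Ag|)%N) (hn : #|Tk| = n) (hn1 : (1 <= n)%N)
  (hmn : (n <= #|Ag|)%N)
  (istar : 'I_n -> Ag) (jstar : 'I_n -> Tk) (mu : 'I_n -> extR R)
  (Pi : assignment Ag Tk) :
  let w := fun (i : Ag) (j : Tk) => d (p i 0) (g j) in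
  seq_bottleneck w istar jstar mu ->
  seq_bottleneck_optimising w istar jstar Pi ->
  forall s : R,
  (forall i i', i != i' -> sf i i' <= s) ->
  elt (Fin s) (mu_min mu) ->
  forall a : R -> R,
  (forall t, 0 <= t <= Tend -> (fin_val (mu_min mu) - s) / 2 <= a t) ->
  (forall t, 0 <= t <= Tend -> forall i : Ag,
      d (p i 0) (p i t) < agent_bound w istar jstar mu s a i t) ->
  (forall t, 0 <= t <= Tend -> forall k : 'I_n,
      d (p (istar k) t) (g (jstar k)) < task_bound w istar jstar mu s a k t) ->
  forall k : 'I_n, forall i' : Ag, i' != istar k ->
  forall t, 0 <= t <= Tend ->
    sf (istar k) i' < d (p (istar k) t) (p i' t).
Proof.
(* The lower bound on [a] only makes the task bounds nonnegative. *)
move=> w seqB Pi_opt s sf_le s_mu a _ agent_dev task_dev k i' i'_ne t t_in.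
have ki' : istar k != i' by rewrite eq_sym.
have mu_gt0 := mu_gt0_of_min (le_trans (hsf0 _ _ ki') (sf_le _ _ ki')) s_mu.
have istar_inj := istar_inj seqB.
apply: le_lt_trans (sf_le _ _ ki') _.
have [l /eqP li' | i'_free] := pickP (fun l => istar l == i').
  rewrite -li' in ki' *.
  have pair (k1 k2 : 'I_n) : (k1 < k2)%N -> s < d (p (istar k1) t) (p (istar k2) t).
    move=> k12; apply: (no_collision_pair hdsym hdtri istar_inj (agent_dev t t_in)
      (task_dev t t_in) k12).
    exact: (margin_cross seqB Pi_opt mu_gt0 k12).
  have [kl | lk | /val_inj kl] := ltngtP k l; [exact: pair | rewrite hdsym; exact: pair |].
  by move: ki'; rewrite kl eqxx.
have {}i'_free l : istar l != i' by rewrite i'_free.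
apply: (no_collision_unassigned hdsym hdtri (agent_dev t t_in) (task_dev t t_in) i'_free).
exact: (margin_unassigned seqB Pi_opt mu_gt0 hn k i'_free).
Qed.
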